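(* Let $q$ be an odd prime power and $n\ge1$ an integer with $\gcd(n+1,q)=1$. If $q>2n$, then there exists $a\in\mathbb{F}_q$ such that $C_n(a)$ is LCD.
   Context: For $a\in\mathbb{F}_q$ and $n \ge 1$, $T_n(a)$ denotes the $n\times n$ symmetric tridiagonal Toeplitz matrix over $\mathbb{F}_q$ with all diagonal entries equal to $a$, all entries on the first super- and sub-diagonals equal to $1$, and all other entries $0$. $C_n(a)$ is the $[2n,n]$ linear code over $\mathbb{F}_q$ with generator matrix $[I_n \mid T_n(a)]$. A linear code $C$ is LCD if $C\cap C^\perp=\{0\}$ (Euclidean dual). *)

From HB Require Import structures.
From mathcomp Require Import all_boot all_order all_algebra all_field.
Set Implicit Arguments. Unset Strict Implicit. Unset Printing Implicit Defensive.
Import GRing.Theory.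
Local Open Scope ring_scope.

Definition tridiag (F : fieldType) (n : nat) (a : F) : 'M[F]_n :=
  \matrix_(i < n, j < n)
    if i == j :> nat then a
    else if (i.+1 == j :> nat) || (j.+1 == i :> nat) then 1 else 0.

(* generator matrix [I_n | T_n(a)] of C_n(a) *)
Definition genC (F : fieldType) (n : nat) (a : F) : 'M[F]_(n, n + n) :=
  row_mx 1%:M (tridiag n a).

Definition in_code (F : fieldType) (k N : nat) (G : 'M[F]_(k, N)) (x : 'rV[F]_N) : bool :=
  (x <= G)%MS.

Definition edot (F : fieldType) (N : nat) (x y : 'rV[F]_N) : F :=
  \sum_(i < N) x 0 i * y 0 i.

Definition in_dual (F : fieldType) (k N : nat) (G : 'M[F]_(k, N)) (x : 'rV[F]_N) : Prop :=
  forall y, in_code G y -> edot x y = 0.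

Definition LCD (F : fieldType) (k N : nat) (G : 'M[F]_(k, N)) : Prop :=
  forall x, in_code G x -> in_dual G x -> x = 0.

From HB Require Import structures.
From mathcomp Require Import all_boot all_order all_algebra all_field.
Set Implicit Arguments. Unset Strict Implicit. Unset Printing Implicit Defensive.
Local Open Scope ring_scope.
Import GRing.Theory.

(* A linear code with generator matrix G is LCD as soon as its
   Gram matrix G G^T is invertible: a codeword u G orthogonal to the code
   satisfies u (G G^T) = 0.  For G = [I_n | T_n(a)] the Gram matrix is
   I + T_n(a)^2, and T_n(a) = a I + S with S := T_n(0).  A vector v with
   v (I + (a I + S)^2) = 0, v <> 0, yields the eigenvector (v, v (a I + S))
   of the fixed 2n x 2n matrix  [[-S, -1], [1, -S]]  for the eigenvalue a.
   Hence every a that is not a root of the characteristic polynomial of this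
   matrix (a monic polynomial of degree 2n) makes C_n(a) LCD, and since
   q > 2n such an a exists in F_q. *)

Section GramCriterion.

Variables (F : fieldType) (k N : nat) (G : 'M[F]_(k, N)).

Lemma edot_row (x : 'rV[F]_N) (i : 'I_k) : edot x (row i G) = (x *m G^T) 0 i.
Proof. by rewrite mxE; apply: eq_bigr => j _; rewrite !mxE. Qed.

Lemma dual_mulmx_tr (x : 'rV[F]_N) : in_dual G x -> x *m G^T = 0.
Proof.
move=> x_dual; apply/rowP => i; rewrite [RHS]mxE -edot_row.
exact/x_dual/row_sub.
Qed.

Lemma LCD_of_gram_det : \det (G *m G^T) != 0 -> LCD G.
Proof.
move=> gram_det x /submxP [u ->] /dual_mulmx_tr; rewrite -mulmxA => uGram0.
have gram_unit : G *m G^T \in unitmx by rewrite unitmxE unitfE.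
by rewrite -(mulmxK gram_unit u) uGram0 !mul0mx.
Qed.

End GramCriterion.

Lemma tridiag_tr (F : fieldType) (n : nat) (a : F) :
  (tridiag n a)^T = tridiag n a.
Proof.
apply/matrixP => i j; rewrite !mxE eq_sym.
by congr (if _ then _ else _); rewrite orbC.
Qed.

Lemma tridiag_shift (F : fieldType) (n : nat) (a : F) :
  tridiag n a = a%:M + tridiag n 0.
Proof.
apply/matrixP => i j; rewrite !mxE; case: eqP => [/val_inj ->|ne_ij].
  by rewrite eqxx addr0.
have -> : (i == j) = false by apply/eqP => eq_ij; apply: ne_ij; rewrite eq_ij.
by rewrite mulr0n add0r.
Qed.

Lemma genC_gram (F : fieldType) (n : nat) (a : F) :
  genC n a *m (genC n a)^T = 1%:M + tridiag n a *m tridiag n a.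
Proof. by rewrite /genC tr_row_mx mul_row_col trmx1 mulmx1 tridiag_tr. Qed.

(* Linearization of the quadratic matrix pencil I + (a I + S)^2 in a. *)
Definition quad_lin (F : fieldType) (n : nat) (S : 'M[F]_n) : 'M[F]_(n + n) :=
  block_mx (- S) (-1) 1 (- S).

(* If I + (a I + S)^2 is singular, then a is an eigenvalue of quad_lin S:
   a kernel vector v gives the eigenvector (v, v (a I + S)). *)
Lemma det_quad_nonroot (F : fieldType) (n : nat) (S : 'M[F]_n) (a : F) :
  ~~ root (char_poly (quad_lin S)) a ->
  \det (1%:M + (a%:M + S) *m (a%:M + S)) != 0.
Proof.
rewrite -eigenvalue_root_char => not_eigen; apply/negP => /det0P [v v_nz v_ker].
apply/(negP not_eigen)/eigenvalueP; set T := a%:M + S.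
have oppS : - S = a%:M - T by rewrite /T opprD addrA subrr add0r.
have vTT : v *m (T *m T) = - v.
  by apply/eqP; rewrite -addr_eq0 addrC -[v in v + _]mulmx1 -mulmxDr v_ker.
exists (row_mx v (v *m T)); last by rewrite row_mx_eq0 negb_and v_nz.
rewrite /quad_lin oppS mul_row_block scale_row_mx; congr row_mx.
  by rewrite mulmxBr mul_mx_scalar mulmx1 -addrA addNr addr0.
rewrite mulmxN mulmx1 mulmxBr mul_mx_scalar -mulmxA vTT opprK.
by rewrite (addrC (a *: _)) addKr.
Qed.

Lemma exists_nonroot (F : finFieldType) (p : {poly F}) :
  p != 0 -> (size p <= #|F|)%N -> exists a : F, ~~ root p a.
Proof.
move=> p_nz size_p; apply/existsP; rewrite -negb_forall.
apply/negP => /forallP all_roots.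
have := max_poly_roots p_nz (rs := enum F).
rewrite enum_uniq -cardE; have -> : all (root p) (enum F) by apply/allP.
by move=> /(_ isT isT); rewrite ltnNge size_p.
Qed.

Theorem corollary2p2 (F : finFieldType) (n : nat) :
  odd #|F| -> (0 < n)%N -> coprime n.+1 #|F| -> (2 * n < #|F|)%N ->
  exists a : F, LCD (genC n a).
Proof.
move=> _ _ _ q_gt_2n; set P := char_poly (quad_lin (tridiag n (0 : F))).
have [a a_nonroot] : exists a : F, ~~ root P a.
  apply: exists_nonroot; first by rewrite -size_poly_eq0 size_char_poly.
  by rewrite size_char_poly addnn -mul2n.
exists a; apply: LCD_of_gram_det.
by rewrite genC_gram tridiag_shift; apply: det_quad_nonroot.
Qed.
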